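(* Let $X_1,\dots,X_n$ be independent Rademacher random variables, $d\le n$, and $f:\{-1,+1\}^n\to\mathbb{R}$ of the form $f(x)=\sum_{S\subseteq[n],|S|\le d}\hat f_Sx_S$. Then for every $t>0$, \[ \mathbb{P}\big(|f(X)-\mathbb{E}f(X)|\ge t\big)\le\exp\Big(1-\min_{j=1,\dots,d}\Big(\frac{t}{de\,\mathrm{W}_j(f)^{1/2}}\Big)^{2/j}\Big). \] Equivalently, with probability at least $1-\exp(1-t)$, $|f(X)-\mathbb{E}f(X)|\le de\max_{j=1,\dots,d}(\mathrm{W}_j(f)t^j)^{1/2}$.
   Context: $\mathbb{P}(X_i=1)=\mathbb{P}(X_i=-1)=1/2$. For $S\subseteq[n]$, $x_S=\prod_{i\in S}x_i$; $\hat f_S=\mathbb{E}[X_Sf(X)]$ are the Fourier–Walsh coefficients, and $\mathrm{W}_j(f)=\sum_{|S|=j}\hat f_S^2$ is the Fourier weight of order $j$ (terms with $\mathrm{W}_j(f)=0$ are interpreted as $+\infty$ in the minimum). *)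

From Stdlib Require Import Reals List.
Import ListNotations.
Open Scope R_scope.

(* Points of {-1,+1}^n are encoded as boolean lists of length n:
   true ↦ +1, false ↦ -1.  Subsets S ⊆ [n] are encoded by their
   indicator boolean lists of length n. *)
Fixpoint cube (n : nat) : list (list bool) :=
  match n with
  | O => [[]]
  | S m => map (cons true) (cube m) ++ map (cons false) (cube m)
  end.

Definition pm (b : bool) : R := if b then 1 else -1.

Fixpoint chi (S x : list bool) : R :=
  match S, x with
  | s :: S', b :: x' => (if s then pm b else 1) * chi S' x'
  | _, _ => 1
  end.

Definition card (S : list bool) : nat := length (filter (fun b => b) S).

Definition sumR {A} (l : list A) (g : A -> R) : R :=
  fold_right Rplus 0 (map g l).

Definition Expect (n : nat) (g : list bool -> R) : R :=
  sumR (cube n) g / 2 ^ n.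

Definition Prob (n : nat) (P : list bool -> Prop)
  (Pdec : forall x, {P x} + {~ P x}) : R :=
  sumR (cube n) (fun x => if Pdec x then 1 else 0) / 2 ^ n.

Definition fhat (n : nat) (f : list bool -> R) (S : list bool) : R :=
  Expect n (fun x => chi S x * f x).

Definition W (n : nat) (f : list bool -> R) (j : nat) : R :=
  sumR (filter (fun S => Nat.eqb (card S) j) (cube n))
       (fun S => fhat n f S ^ 2).

(* The j-th term of the minimum, None standing for +infinity (W_j = 0). *)
Definition term (n d : nat) (f : list bool -> R) (t : R) (j : nat) : option R :=
  if Req_EM_T (W n f j) 0 then None
  else Some (Rpower (t / (INR d * exp 1 * sqrt (W n f j))) (2 / INR j)).

Definition omin (a b : option R) : option R :=
  match a, b with
  | None, _ => b
  | _, None => a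
  | Some x, Some y => Some (Rmin x y)
  end.

Definition minterm (n d : nat) (f : list bool -> R) (t : R) : option R :=
  fold_right omin None (map (term n d f t) (seq 1 d)).

Definition tail_bound (m : option R) : R :=
  match m with
  | None => 0
  | Some m => exp (1 - m)
  end.

Definition dev_event (n : nat) (f : list bool -> R) (t : R) (x : list bool) : Prop :=
  t <= Rabs (f x - Expect n f).

Definition dev_event_dec (n : nat) (f : list bool -> R) (t : R) :
  forall x, {dev_event n f t x} + {~ dev_event n f t x} :=
  fun x => Rle_dec t (Rabs (f x - Expect n f)).

(* Bonami's lemma: for a Walsh polynomial g with coefficients a_S and k >= 1,
   E[g^(2k)] <= (sum_S (2k-1)^|S| a_S^2)^k.  It is proved coordinate by coordinate:
   splitting g = g0 + x_1 g1, the two-point inequality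
   (A+B)^(2k) + (A-B)^(2k) <= 2 (A^2 + (2k-1) B^2)^k reduces one variable, and Minkowski's
   inequality in L^k recombines the two halves.  For the centred f this bounds the 2k-th
   moment by (sum_j (2k-1)^j W_j)^k.  If m is the minimum in the statement and
   2k - 1 <= m, every term satisfies (2k-1)^j W_j <= (t/(d e))^2, so Markov's inequality
   gives P(|f - E f| >= t) <= e^(-2k); choosing 2k in [m-1, m+1] yields exp(1 - m). *)

From Stdlib Require Import Reals List Lra Lia ZArith.
Import ListNotations.
Open Scope R_scope.

Section SumR.
Context {A : Type}.
Implicit Types (l : list A) (g h : A -> R).

Lemma sumR_nil g : sumR [] g = 0.
Proof. reflexivity. Qed.

Lemma sumR_cons a l g : sumR (a :: l) g = g a + sumR l g.
Proof. reflexivity. Qed.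

Lemma sumR_app l1 l2 g : sumR (l1 ++ l2) g = sumR l1 g + sumR l2 g.
Proof.
  induction l1 as [|a l1 IH]; [cbn [app]; rewrite sumR_nil; ring|].
  cbn [app]; rewrite !sumR_cons, IH; ring.
Qed.

Lemma sumR_ext_in l g h : (forall x, In x l -> g x = h x) -> sumR l g = sumR l h.
Proof.
  induction l as [|a l IH]; intros H; [reflexivity|].
  rewrite !sumR_cons, H, IH; auto; [intros; apply H|]; simpl; auto.
Qed.

Lemma sumR_plus l g h : sumR l (fun x => g x + h x) = sumR l g + sumR l h.
Proof. induction l as [|a l IH]; [rewrite !sumR_nil; ring|]. rewrite !sumR_cons, IH; ring. Qed.

Lemma sumR_mult_l l c g : sumR l (fun x => c * g x) = c * sumR l g.
Proof. induction l as [|a l IH]; [rewrite !sumR_nil; ring|]. rewrite !sumR_cons, IH; ring. Qed.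

Lemma sumR_const l K : sumR l (fun _ => K) = INR (length l) * K.
Proof.
  induction l as [|a l IH]; [rewrite sumR_nil; cbn; ring|].
  rewrite sumR_cons, IH; cbn [length]; rewrite S_INR; ring.
Qed.

Lemma sumR_le_in l g h : (forall x, In x l -> g x <= h x) -> sumR l g <= sumR l h.
Proof.
  induction l as [|a l IH]; intros H; [rewrite !sumR_nil; lra|].
  rewrite !sumR_cons; apply Rplus_le_compat; [apply H | apply IH; intros; apply H];
    simpl; auto.
Qed.

Lemma sumR_nonneg l g : (forall x, In x l -> 0 <= g x) -> 0 <= sumR l g.
Proof.
  intros H; rewrite <- (Rmult_0_r (INR (length l))), <- sumR_const.
  now apply sumR_le_in.
Qed.

Lemma sumR_eq0_in l g : (forall x, In x l -> 0 <= g x) -> sumR l g <= 0 ->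
  forall x, In x l -> g x = 0.
Proof.
  induction l as [|a l IH]; intros H Hs x Hx; [destruct Hx|].
  rewrite sumR_cons in Hs.
  assert (0 <= g a) by (apply H; simpl; auto).
  assert (0 <= sumR l g) by (apply sumR_nonneg; intros; apply H; simpl; auto).
  destruct Hx as [<-|Hx]; [lra|].
  apply IH; auto; [intros; apply H; simpl; auto | lra].
Qed.

Lemma sumR_filter (p : A -> bool) l g :
  sumR (filter p l) g = sumR l (fun x => if p x then g x else 0).
Proof.
  induction l as [|a l IH]; [reflexivity|]; cbn [filter].
  destruct (p a) eqn:E; rewrite ?sumR_cons, IH, ?E; ring.
Qed.

End SumR.

Lemma sumR_map {A B} (l : list A) (h : A -> B) (g : B -> R) :
  sumR (map h l) g = sumR l (fun x => g (h x)).
Proof. unfold sumR; now rewrite map_map. Qed.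

Lemma sumR_cube_S n g : sumR (cube (S n)) g =
  sumR (cube n) (fun x => g (true :: x)) + sumR (cube n) (fun x => g (false :: x)).
Proof. cbn [cube]; now rewrite sumR_app, !sumR_map. Qed.

Lemma in_cube_S n x : In x (cube (S n)) -> exists b x', x = b :: x' /\ In x' (cube n).
Proof.
  cbn [cube]; intros H; apply in_app_or in H.
  destruct H as [H|H]; apply in_map_iff in H; destruct H as [x' [<- H]]; eauto.
Qed.

Lemma sumR_cube_const n K : sumR (cube n) (fun _ => K) = 2 ^ n * K.
Proof.
  induction n as [|n IH]; [cbn [cube]; rewrite sumR_cons, sumR_nil; ring|].
  rewrite sumR_cube_S, IH; cbn; ring.
Qed.

Lemma zeros_in_cube n : In (repeat false n) (cube n).
Proof. induction n; cbn; auto. apply in_or_app; right; now apply in_map. Qed.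

Lemma card_repeat_false n : card (repeat false n) = 0%nat.
Proof. now induction n. Qed.

Lemma chi_card0 S x : card S = 0%nat -> chi S x = 1.
Proof.
  revert x; induction S as [|s S IH]; intros x H; [now destruct x|].
  destruct s; [discriminate|]. destruct x; [reflexivity|].
  cbn; rewrite IH; auto; ring.
Qed.

Lemma Expect_ext n g h : (forall x, In x (cube n) -> g x = h x) -> Expect n g = Expect n h.
Proof. intros H; unfold Expect; now rewrite (sumR_ext_in _ _ _ H). Qed.

Lemma Expect_plus_const n g K : Expect n (fun x => g x + K) = Expect n g + K.
Proof.
  unfold Expect; rewrite sumR_plus, sumR_cube_const.
  field; apply pow_nonzero; lra.
Qed.

Definition walsh n (a : list bool -> R) (x : list bool) : R :=
  sumR (cube n) (fun S => a S * chi S x).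

Lemma walsh_0 a : walsh 0 a [] = a [].
Proof. unfold walsh; cbn [cube]; rewrite sumR_cons, sumR_nil; cbn; ring. Qed.

Lemma walsh_cons n a b x : walsh (S n) a (b :: x) =
  pm b * walsh n (fun S => a (true :: S)) x + walsh n (fun S => a (false :: S)) x.
Proof.
  unfold walsh; rewrite sumR_cube_S, <- sumR_mult_l; cbn [chi].
  f_equal; apply sumR_ext_in; intros; ring.
Qed.

Lemma sumR_chi_walsh n a S : In S (cube n) ->
  sumR (cube n) (fun x => chi S x * walsh n a x) = 2 ^ n * a S.
Proof.
  revert a S; induction n as [|n IH]; intros a S HS.
  - destruct HS as [<-|[]]; cbn [cube]; rewrite sumR_cons, sumR_nil, walsh_0; cbn; ring.
  - destruct (in_cube_S _ _ HS) as [s [S' [-> HS']]].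
    rewrite sumR_cube_S, <- sumR_plus.
    set (a' := fun T => a (s :: T)).
    rewrite (sumR_ext_in _ _ (fun x => 2 * (chi S' x * walsh n a' x))).
    + rewrite sumR_mult_l, IH by exact HS'; unfold a'; cbn [pow]; ring.
    + intros x _; rewrite !walsh_cons; unfold a'; destruct s; cbn; ring.
Qed.

Lemma Expect_walsh n a : Expect n (walsh n a) = a (repeat false n).
Proof.
  unfold Expect.
  rewrite (sumR_ext_in _ _ (fun x => chi (repeat false n) x * walsh n a x)).
  - rewrite sumR_chi_walsh by apply zeros_in_cube; field; apply pow_nonzero; lra.
  - intros x _; rewrite chi_card0 by apply card_repeat_false; ring.
Qed.

Definition drop_const (a : list bool -> R) (S : list bool) : R :=
  if Nat.eqb (card S) 0 then 0 else a S.

Lemma walsh_sub_Expect n a x :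
  walsh n a x - Expect n (walsh n a) = walsh n (drop_const a) x.
Proof.
  set (K := sumR (cube n) (fun S => if Nat.eqb (card S) 0 then a S else 0)).
  assert (Hsplit : forall y, walsh n a y = walsh n (drop_const a) y + K).
  { intros y; unfold walsh, K; rewrite <- sumR_plus; apply sumR_ext_in; intros S _.
    unfold drop_const; destruct (Nat.eqb (card S) 0) eqn:E; [|ring].
    apply Nat.eqb_eq in E; rewrite chi_card0 by exact E; ring. }
  rewrite (Expect_ext _ _ _ (fun y _ => Hsplit y)), Expect_plus_const, Expect_walsh, Hsplit.
  unfold drop_const; rewrite card_repeat_false; cbn [Nat.eqb]; ring.
Qed.

Lemma C_nonneg n p : 0 <= C n p.
Proof.
  unfold C, Rdiv; apply Rmult_le_pos; [apply pos_INR|].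
  apply Rlt_le, Rinv_0_lt_compat, Rmult_lt_0_compat; apply INR_fact_lt_0.
Qed.

Lemma C_n_0 n : C n 0 = 1.
Proof.
  unfold C; rewrite Nat.sub_0_r; cbn [Factorial.fact INR].
  field; apply Rgt_not_eq, INR_fact_lt_0.
Qed.

Lemma C_double_le k l : (l <= k)%nat -> C (2 * k) (2 * l) <= C k l * (2 * INR k - 1) ^ l.
Proof.
  induction l as [|l IH]; intros Hl.
  { rewrite Nat.mul_0_r, !C_n_0; cbn; lra. }
  replace (2 * S l)%nat with (S (S (2 * l))) by lia.
  rewrite !pascal_step3 by lia; rewrite !minus_INR by lia; rewrite !S_INR, !mult_INR.
  cbn [INR]; rewrite <- tech_pow_Rmult.
  assert (Hkl : INR l + 1 <= INR k) by (rewrite <- S_INR; apply le_INR; lia).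
  assert (Hl0 := pos_INR l).
  set (a := INR l) in *; set (b := INR k) in *.
  (* one step multiplies the left side by [(b - a)/(a + 1) * (2b - 2a - 1)/(2a + 1)]
     and the right side by [(b - a)/(a + 1) * (2b - 1)] *)
  assert (Hratio : (2 * b - (2 * a + 1)) / (2 * a + 1) <= 2 * b - 1).
  { apply (Rmult_le_reg_r (2 * a + 1)); [lra|].
    unfold Rdiv; rewrite Rmult_assoc, Rinv_l by lra; nra. }
  assert (Hratio0 : 0 <= (2 * b - (2 * a + 1)) / (2 * a + 1)).
  { apply Rle_mult_inv_pos; lra. }
  assert (Hp : 0 <= (b - a) / (a + 1)) by (apply Rle_mult_inv_pos; lra).
  assert (HC := C_nonneg (2 * k) (2 * l)).
  transitivity ((b - a) / (a + 1) * ((2 * b - (2 * a + 1)) / (2 * a + 1) * C (2 * k) (2 * l))).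
  { right; field; lra. }
  replace ((1 + 1) * b - (1 + 1) * a) with (2 * (b - a)) by ring.
  rewrite Rmult_assoc; apply Rmult_le_compat_l; [exact Hp|].
  replace (C k l * ((2 * b - 1) * (2 * b - 1) ^ l)) with
    ((2 * b - 1) * (C k l * (2 * b - 1) ^ l)) by ring.
  apply Rmult_le_compat; auto; apply IH; lia.
Qed.

Lemma pow_opp_odd x l : (- x) ^ S (2 * l) = - x ^ S (2 * l).
Proof. rewrite <- !tech_pow_Rmult, !pow_mult; replace ((- x) ^ 2) with (x ^ 2) by ring; ring. Qed.

Lemma two_point_moment k A B :
  (A + B) ^ (2 * k) + (A - B) ^ (2 * k) <= 2 * (A ^ 2 + (2 * INR k - 1) * B ^ 2) ^ k.
Proof.
  destruct k as [|k']; [cbn; lra|].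
  rewrite (Rplus_comm A B), (Rplus_comm (A ^ 2)); replace (A - B) with (- B + A) by ring.
  rewrite 3!binomial, <- plus_sum, <- sum_decomposition; set (k := S k').
  (* the odd-index terms cancel *)
  rewrite (sum_eq_R0 _ k'), Rplus_0_r, scal_sum.
  2:{ intros l _; rewrite pow_opp_odd; ring. }
  apply sum_Rle; intros l Hl.
  replace (2 * k - 2 * l)%nat with (2 * (k - l))%nat by lia.
  rewrite !pow_mult, Rpow_mult_distr; replace ((- B) ^ 2) with (B ^ 2) by ring.
  assert (0 <= (B ^ 2) ^ l) by (apply pow_le, pow2_ge_0).
  assert (0 <= (A ^ 2) ^ (k - l)) by (apply pow_le, pow2_ge_0).
  assert (HC := C_double_le k l Hl).
  replace (C (2 * k) (2 * l) * (B ^ 2) ^ l * (A ^ 2) ^ (k - l) +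
           C (2 * k) (2 * l) * (B ^ 2) ^ l * (A ^ 2) ^ (k - l))
    with (2 * ((B ^ 2) ^ l * (A ^ 2) ^ (k - l)) * C (2 * k) (2 * l)) by ring.
  replace (C k l * ((2 * INR k - 1) ^ l * (B ^ 2) ^ l) * (A ^ 2) ^ (k - l) * 2)
    with (2 * ((B ^ 2) ^ l * (A ^ 2) ^ (k - l)) * (C k l * (2 * INR k - 1) ^ l)) by ring.
  apply Rmult_le_compat_l; [apply Rmult_le_pos; [lra | now apply Rmult_le_pos]| exact HC].
Qed.

Lemma pow_convex k lam a b : 0 <= lam <= 1 -> 0 <= a -> 0 <= b ->
  (lam * a + (1 - lam) * b) ^ k <= lam * a ^ k + (1 - lam) * b ^ k.
Proof.
  intros Hl Ha Hb; induction k as [|k IH]; [cbn; lra|]; cbn [pow].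
  assert (0 <= lam * a + (1 - lam) * b) by nra.
  apply Rle_trans with ((lam * a + (1 - lam) * b) * (lam * a ^ k + (1 - lam) * b ^ k)).
  { now apply Rmult_le_compat_l. }
  (* Chebyshev: a ^ k - b ^ k and a - b have the same sign *)
  assert (0 <= (a ^ k - b ^ k) * (a - b)).
  { destruct (Rle_dec a b).
    - assert (a ^ k <= b ^ k) by (apply pow_incr; lra); nra.
    - assert (b ^ k <= a ^ k) by (apply pow_incr; lra); nra. }
  assert (0 <= lam * (1 - lam)) by nra.
  nra.
Qed.

Lemma sumR_pow_add_null {A} (l : list A) k (X Y : A -> R) : (1 <= k)%nat ->
  (forall x, In x l -> 0 <= X x) -> sumR l (fun x => X x ^ k) <= 0 ->
  sumR l (fun x => (X x + Y x) ^ k) = sumR l (fun x => Y x ^ k).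
Proof.
  intros Hk HX H; apply sumR_ext_in; intros x Hx.
  assert (HX0 := sumR_eq0_in l (fun x => X x ^ k) ltac:(intros y Hy; apply pow_le, HX, Hy) H x Hx).
  destruct (Req_dec (X x) 0) as [->|Hne]; [f_equal; ring|].
  exfalso; exact (pow_nonzero _ k Hne HX0).
Qed.

(* the triangle inequality in L^k, stated without k-th roots *)
Lemma sumR_pow_add_le {A} (l : list A) N k (X Y : A -> R) u v : (1 <= k)%nat ->
  0 <= N -> 0 <= u -> 0 <= v ->
  (forall x, In x l -> 0 <= X x) -> (forall x, In x l -> 0 <= Y x) ->
  sumR l (fun x => X x ^ k) <= N * u ^ k -> sumR l (fun x => Y x ^ k) <= N * v ^ k ->
  sumR l (fun x => (X x + Y x) ^ k) <= N * (u + v) ^ k.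
Proof.
  intros Hk HN Hu Hv HX HY H1 H2.
  assert (Hk0 : 0 ^ k = 0) by (apply pow_i; lia).
  destruct (Req_dec u 0) as [->|Hu0].
  { rewrite Hk0, Rmult_0_r in H1.
    now rewrite sumR_pow_add_null, Rplus_0_l. }
  destruct (Req_dec v 0) as [->|Hv0].
  { rewrite (sumR_ext_in _ _ (fun x => (Y x + X x) ^ k)) by (intros; f_equal; ring).
    rewrite Hk0, Rmult_0_r in H2.
    now rewrite sumR_pow_add_null, Rplus_0_r. }
  set (lam := u / (u + v)).
  assert (Hlam : 0 <= lam <= 1).
  { unfold lam; split; [apply Rle_mult_inv_pos; lra|].
    apply (Rmult_le_reg_r (u + v)); [lra|].
    unfold Rdiv; rewrite Rmult_assoc, Rinv_l by lra; lra. }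
  (* X + Y = (u + v) (lam (X / u) + (1 - lam) (Y / v)), then convexity of t ^ k *)
  set (cX := (u + v) ^ k * lam * (/ u) ^ k).
  set (cY := (u + v) ^ k * (1 - lam) * (/ v) ^ k).
  apply Rle_trans with (sumR l (fun x => cX * X x ^ k + cY * Y x ^ k)).
  { apply sumR_le_in; intros x Hx.
    assert (HXx := HX x Hx); assert (HYx := HY x Hx).
    replace (X x + Y x) with ((u + v) * (lam * (X x * / u) + (1 - lam) * (Y x * / v)))
      by (unfold lam; field; lra).
    rewrite Rpow_mult_distr.
    apply Rle_trans with ((u + v) ^ k * (lam * (X x * / u) ^ k + (1 - lam) * (Y x * / v) ^ k)).
    { apply Rmult_le_compat_l; [apply pow_le; lra|].
      apply pow_convex; auto; apply Rle_mult_inv_pos; lra. }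
    unfold cX, cY; rewrite !Rpow_mult_distr; right; ring. }
  rewrite sumR_plus, !sumR_mult_l.
  assert (HcX : 0 <= cX).
  { unfold cX; apply Rmult_le_pos; [apply Rmult_le_pos; [apply pow_le|]; lra|].
    apply pow_le, Rlt_le, Rinv_0_lt_compat; lra. }
  assert (HcY : 0 <= cY).
  { unfold cY; apply Rmult_le_pos; [apply Rmult_le_pos; [apply pow_le|]; lra|].
    apply pow_le, Rlt_le, Rinv_0_lt_compat; lra. }
  apply Rle_trans with (cX * (N * u ^ k) + cY * (N * v ^ k)).
  { apply Rplus_le_compat; now apply Rmult_le_compat_l. }
  unfold cX, cY; right.
  transitivity (N * (u + v) ^ k * (lam * (/ u * u) ^ k + (1 - lam) * (/ v * v) ^ k)).
  { rewrite !Rpow_mult_distr; ring. }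
  rewrite !Rinv_l, !pow1 by lra; ring.
Qed.

Definition noise_weight n (r : R) (a : list bool -> R) : R :=
  sumR (cube n) (fun S => a S ^ 2 * r ^ card S).

Lemma noise_weight_nonneg n r a : 0 <= r -> 0 <= noise_weight n r a.
Proof.
  intros Hr; apply sumR_nonneg; intros.
  apply Rmult_le_pos; [apply pow2_ge_0 | now apply pow_le].
Qed.

Lemma noise_weight_S n r a : noise_weight (S n) r a =
  noise_weight n r (fun S => a (false :: S)) + r * noise_weight n r (fun S => a (true :: S)).
Proof.
  unfold noise_weight; rewrite sumR_cube_S, <- sumR_mult_l, Rplus_comm.
  f_equal; apply sumR_ext_in; intros; unfold card; cbn [filter length pow]; ring.
Qed.

Lemma bonami_moment n k a : (1 <= k)%nat ->
  sumR (cube n) (fun x => walsh n a x ^ (2 * k)) <= 2 ^ n * noise_weight n (2 * INR k - 1) a ^ k.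
Proof.
  intros Hk; assert (Hr : 1 <= 2 * INR k - 1) by (apply le_INR in Hk; cbn in Hk; lra).
  set (r := 2 * INR k - 1) in *.
  revert a; induction n as [|n IH]; intros a.
  { unfold noise_weight; cbn [cube]; rewrite !sumR_cons, !sumR_nil, walsh_0.
    right; rewrite pow_mult; cbn [card filter length pow].
    now rewrite !Rmult_1_r, !Rplus_0_r, Rmult_1_l. }
  set (a1 := fun S => a (true :: S)); set (a0 := fun S => a (false :: S)).
  rewrite sumR_cube_S, <- sumR_plus.
  apply Rle_trans with
    (sumR (cube n) (fun x => 2 * (walsh n a0 x ^ 2 + r * walsh n a1 x ^ 2) ^ k)).
  { apply sumR_le_in; intros x _; rewrite !walsh_cons; cbn [pm]; fold a0 a1.
    replace (1 * walsh n a1 x + walsh n a0 x) with (walsh n a0 x + walsh n a1 x) by ring.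
    replace (-1 * walsh n a1 x + walsh n a0 x) with (walsh n a0 x - walsh n a1 x) by ring.
    apply two_point_moment. }
  rewrite sumR_mult_l, noise_weight_S; fold a0 a1.
  replace (2 ^ S n) with (2 * 2 ^ n) by reflexivity; rewrite Rmult_assoc.
  apply Rmult_le_compat_l; [lra|].
  (* Minkowski in L^k for X = (walsh a0)^2 and Y = r (walsh a1)^2, each bounded by induction *)
  apply sumR_pow_add_le; auto.
  - apply pow_le; lra.
  - apply noise_weight_nonneg; lra.
  - apply Rmult_le_pos; [lra | apply noise_weight_nonneg; lra].
  - intros; apply pow2_ge_0.
  - intros; apply Rmult_le_pos; [lra | apply pow2_ge_0].
  - rewrite <- (IH a0); right; apply sumR_ext_in; intros; now rewrite pow_mult.
  - rewrite (sumR_ext_in _ _ (fun x => r ^ k * walsh n a1 x ^ (2 * k)))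
      by (intros; now rewrite Rpow_mult_distr, pow_mult).
    rewrite sumR_mult_l, Rpow_mult_distr.
    replace (2 ^ n * (r ^ k * noise_weight n r a1 ^ k))
      with (r ^ k * (2 ^ n * noise_weight n r a1 ^ k)) by ring.
    apply Rmult_le_compat_l; [apply pow_le; lra | apply IH].
Qed.

Lemma Prob_le_1 n P (Pdec : forall x, {P x} + {~ P x}) : Prob n P Pdec <= 1.
Proof.
  unfold Prob; apply (Rmult_le_reg_r (2 ^ n)); [apply pow_lt; lra|].
  unfold Rdiv; rewrite Rmult_assoc, Rinv_l, Rmult_1_r, Rmult_1_l by (apply pow_nonzero; lra).
  rewrite <- (Rmult_1_r (2 ^ n)), <- sumR_cube_const.
  apply sumR_le_in; intros x _; destruct (Pdec x); lra.
Qed.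

Lemma Prob_le_moment n P (Pdec : forall x, {P x} + {~ P x}) g t k : 0 < t ->
  (forall x, In x (cube n) -> P x -> t <= Rabs (g x)) ->
  Prob n P Pdec <= Expect n (fun x => g x ^ (2 * k)) / t ^ (2 * k).
Proof.
  intros Ht HP; assert (Htk : 0 < t ^ (2 * k)) by (apply pow_lt; lra).
  unfold Prob, Expect, Rdiv; rewrite Rmult_assoc, (Rmult_comm (/ 2 ^ n)), <- Rmult_assoc.
  apply Rmult_le_compat_r; [apply Rlt_le, Rinv_0_lt_compat, pow_lt; lra|].
  rewrite Rmult_comm, <- sumR_mult_l; apply sumR_le_in; intros x Hx.
  assert (Hg : 0 <= g x ^ (2 * k)) by (rewrite pow_mult; apply pow_le, pow2_ge_0).
  destruct (Pdec x) as [HPx|_]; [|apply Rmult_le_pos; auto; apply Rlt_le, Rinv_0_lt_compat, Htk].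
  assert (t ^ (2 * k) <= g x ^ (2 * k)).
  { rewrite !pow_mult, <- (pow2_abs (g x)), <- pow_mult, <- pow_mult.
    apply pow_incr; split; [lra | now apply HP]. }
  apply (Rmult_le_reg_r (t ^ (2 * k))); [exact Htk|].
  rewrite (Rmult_comm (/ _)), Rmult_assoc, Rinv_l; lra.
Qed.

Lemma sumR_seq_indicator k s m v : (s <= k < s + m)%nat ->
  sumR (seq s m) (fun j => if Nat.eqb k j then v else 0) = v.
Proof.
  revert s; induction m as [|m IH]; intros s Hk; [lia|].
  cbn [seq]; rewrite sumR_cons.
  destruct (Nat.eqb_spec k s) as [->|Hne].
  - rewrite (sumR_ext_in _ _ (fun _ => 0)), sumR_const by
      (intros j Hj; apply in_seq in Hj; destruct (Nat.eqb_spec s j); [lia | reflexivity]).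
    ring.
  - rewrite IH by lia; ring.
Qed.

Lemma sumR_by_card d (l : list (list bool)) h :
  (forall S, In S l -> (card S = 0 \/ d < card S)%nat -> h S = 0) ->
  sumR l h = sumR (seq 1 d) (fun j => sumR (filter (fun S => Nat.eqb (card S) j) l) h).
Proof.
  induction l as [|S l IH]; intros Hh.
  { rewrite sumR_nil, (sumR_ext_in _ _ (fun _ => 0)), sumR_const by reflexivity; ring. }
  rewrite sumR_cons, IH by (intros; apply Hh; cbn; auto).
  transitivity (sumR (seq 1 d) (fun j => (if Nat.eqb (card S) j then h S else 0) +
      sumR (filter (fun T => Nat.eqb (card T) j) l) h)).
  2:{ apply sumR_ext_in; intros j _; cbn [filter].
      destruct (Nat.eqb (card S) j); rewrite ?sumR_cons; ring. }
  rewrite sumR_plus; f_equal.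
  destruct (Nat.eq_dec (card S) 0) as [H0|H0]; [|destruct (Nat.lt_ge_cases d (card S))].
  1,2: rewrite Hh by (cbn; auto; lia);
       rewrite (sumR_ext_in _ _ (fun _ => 0)), sumR_const
         by (intros j _; now destruct (Nat.eqb (card S) j)); ring.
  symmetry; apply sumR_seq_indicator; lia.
Qed.

Lemma W_nonneg n f j : 0 <= W n f j.
Proof. apply sumR_nonneg; intros; apply pow2_ge_0. Qed.

Definition trunc d (c : list bool -> R) (S : list bool) : R :=
  if Nat.leb (card S) d then c S else 0.

Section DegreeAtMost.
Variables (n d : nat) (f c : list bool -> R).
Hypothesis hf : forall x, In x (cube n) ->
  f x = sumR (filter (fun S => Nat.leb (card S) d) (cube n)) (fun S => c S * chi S x).

Lemma f_walsh x : In x (cube n) -> f x = walsh n (trunc d c) x.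
Proof.
  intros Hx; rewrite hf, sumR_filter by exact Hx; apply sumR_ext_in; intros S _.
  unfold trunc; destruct (Nat.leb (card S) d); ring.
Qed.

Lemma f_sub_Expect x : In x (cube n) ->
  f x - Expect n f = walsh n (drop_const (trunc d c)) x.
Proof.
  intros Hx; rewrite <- walsh_sub_Expect, f_walsh by exact Hx.
  now rewrite (Expect_ext _ _ _ f_walsh).
Qed.

Lemma fhat_trunc S : In S (cube n) -> fhat n f S = trunc d c S.
Proof.
  intros HS; unfold fhat, Expect.
  rewrite (sumR_ext_in _ _ (fun x => chi S x * walsh n (trunc d c) x))
    by (intros x Hx; now rewrite f_walsh).
  rewrite sumR_chi_walsh by exact HS; field; apply pow_nonzero; lra.
Qed.

Lemma noise_weight_W r :
  noise_weight n r (drop_const (trunc d c)) = sumR (seq 1 d) (fun j => r ^ j * W n f j).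
Proof.
  unfold noise_weight; rewrite (sumR_by_card d).
  - apply sumR_ext_in; intros j Hj; apply in_seq in Hj.
    unfold W; rewrite <- sumR_mult_l; apply sumR_ext_in; intros S HS.
    apply filter_In in HS; destruct HS as [HS Hcard]; apply Nat.eqb_eq in Hcard.
    rewrite fhat_trunc by exact HS; unfold drop_const; rewrite Hcard.
    replace (Nat.eqb j 0) with false by (symmetry; apply Nat.eqb_neq; lia); ring.
  - intros S _ [H|H]; unfold drop_const, trunc.
    + rewrite H; cbn; ring.
    + replace (Nat.leb (card S) d) with false by (symmetry; apply Nat.leb_gt; lia).
      destruct (Nat.eqb _ _); ring.
Qed.

Lemma deviation_moment_bound k t : (1 <= k)%nat -> 0 < t ->
  Prob n (dev_event n f t) (dev_event_dec n f t) <=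
  sumR (seq 1 d) (fun j => (2 * INR k - 1) ^ j * W n f j) ^ k / t ^ (2 * k).
Proof.
  intros Hk Ht.
  eapply Rle_trans.
  { apply (Prob_le_moment _ _ _ (walsh n (drop_const (trunc d c))) t k Ht).
    intros x Hx Hdev; unfold dev_event in Hdev; now rewrite <- f_sub_Expect. }
  unfold Rdiv; apply Rmult_le_compat_r; [apply Rlt_le, Rinv_0_lt_compat, pow_lt; lra|].
  rewrite <- noise_weight_W; unfold Expect.
  apply (Rmult_le_reg_l (2 ^ n)); [apply pow_lt; lra|].
  unfold Rdiv; rewrite Rmult_comm, Rmult_assoc, Rinv_l, Rmult_1_r by (apply pow_nonzero; lra).
  now apply bonami_moment.
Qed.

End DegreeAtMost.

Lemma fold_omin_None l : fold_right omin None l = None -> forall o, In o l -> o = None.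
Proof.
  induction l as [|a l IH]; intros H o Ho; [destruct Ho|]; cbn in H.
  destruct a, (fold_right omin None l) eqn:E; cbn in H; try discriminate.
  destruct Ho as [<-|Ho]; auto.
Qed.

Lemma fold_omin_Some_le l m : fold_right omin None l = Some m ->
  forall y, In (Some y) l -> m <= y.
Proof.
  revert m; induction l as [|a l IH]; intros m H y Hy; [destruct Hy|]; cbn in H.
  destruct Hy as [->|Hy].
  - destruct (fold_right omin None l); injection H as <-; [apply Rmin_l | lra].
  - destruct a as [x|], (fold_right omin None l) as [z|] eqn:E; cbn in H; try discriminate.
    + injection H as <-; apply Rle_trans with z; [apply Rmin_r | now apply IH].
    + discriminate (fold_omin_None l E _ Hy).
    + now apply IH.
Qed.

Lemma minterm_None_W n d f t : minterm n d f t = None ->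
  forall j, In j (seq 1 d) -> W n f j = 0.
Proof.
  intros H j Hj; assert (Hn := fold_omin_None _ H (term n d f t j) (in_map _ _ _ Hj)).
  unfold term in Hn; now destruct (Req_EM_T (W n f j) 0).
Qed.

Lemma pow_le_sq_of_le_Rpower x r j : 0 < x -> (0 < j)%nat -> 0 <= r ->
  r <= Rpower x (2 / INR j) -> r ^ j <= x ^ 2.
Proof.
  intros Hx Hj Hr Hle; assert (Hj0 : 0 < INR j) by now apply lt_0_INR.
  apply Rle_trans with (Rpower x (2 / INR j) ^ j); [now apply pow_incr|].
  rewrite <- Rpower_pow, Rpower_mult by apply exp_pos.
  replace (2 / INR j * INR j) with (INR 2) by (cbn; field; lra).
  now rewrite Rpower_pow by exact Hx; right.
Qed.

Lemma weight_sum_le n d f t m r : 0 < t -> minterm n d f t = Some m -> 0 <= r <= m ->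
  sumR (seq 1 d) (fun j => r ^ j * W n f j) <= (t / exp 1) ^ 2.
Proof.
  intros Ht Hm Hr.
  assert (Hd : (1 <= d)%nat) by (destruct d; [discriminate | lia]).
  assert (HdR : 1 <= INR d) by (apply le_INR in Hd; cbn in Hd; lra).
  assert (He := exp_pos 1).
  apply Rle_trans with (sumR (seq 1 d) (fun _ => (t / (INR d * exp 1)) ^ 2)).
  - apply sumR_le_in; intros j Hj; apply in_seq in Hj.
    destruct (Req_EM_T (W n f j) 0) as [HW0|HW0]; [rewrite HW0, Rmult_0_r; apply pow2_ge_0|].
    assert (HWpos : 0 < W n f j) by (assert (HW := W_nonneg n f j); lra).
    assert (Hsq : 0 < sqrt (W n f j)) by now apply sqrt_lt_R0.
    assert (Hmj : m <= Rpower (t / (INR d * exp 1 * sqrt (W n f j))) (2 / INR j)).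
    { apply (fold_omin_Some_le _ _ Hm).
      replace (Some _) with (term n d f t j) by (unfold term; now destruct (Req_EM_T (W n f j) 0)).
      apply in_map, in_seq; lia. }
    apply pow_le_sq_of_le_Rpower in Hmj; [| | lia | lra].
    2:{ apply Rdiv_lt_0_compat; [lra | repeat apply Rmult_lt_0_compat; lra]. }
    apply Rle_trans with ((t / (INR d * exp 1 * sqrt (W n f j))) ^ 2 * W n f j).
    + apply Rmult_le_compat_r; [lra|].
      apply Rle_trans with (m ^ j); [apply pow_incr; lra | exact Hmj].
    + right; rewrite <- (pow2_sqrt (W n f j)) at 2 by lra; field; lra.
  - rewrite sumR_const, length_seq.
    replace (INR d * (t / (INR d * exp 1)) ^ 2) with ((t / exp 1) ^ 2 * / INR d)
      by (field; lra).
    rewrite <- (Rmult_1_r ((t / exp 1) ^ 2)) at 2.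
    apply Rmult_le_compat_l; [apply pow2_ge_0|].
    rewrite <- Rinv_1; apply Rinv_le_contravar; lra.
Qed.

Lemma moment_ratio_le_exp s t k : 0 < t -> 0 <= s <= (t / exp 1) ^ 2 ->
  s ^ k / t ^ (2 * k) <= exp (- (2 * INR k)).
Proof.
  intros Ht Hs; assert (He := exp_pos 1); assert (Htk : 0 < t ^ (2 * k)) by (apply pow_lt; lra).
  apply Rle_trans with (((t / exp 1) ^ 2) ^ k / t ^ (2 * k)).
  { apply Rmult_le_compat_r; [apply Rlt_le, Rinv_0_lt_compat, Htk | now apply pow_incr]. }
  rewrite <- pow_mult.
  replace ((t / exp 1) ^ (2 * k)) with (t ^ (2 * k) / exp 1 ^ (2 * k))
    by (unfold Rdiv; now rewrite Rpow_mult_distr, pow_inv).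
  replace (exp 1 ^ (2 * k)) with (exp (2 * INR k))
    by (rewrite <- Rpower_pow, mult_INR by exact He; unfold Rpower; rewrite ln_exp; cbn; f_equal; ring).
  assert (Hek := exp_pos (2 * INR k)).
  rewrite exp_Ropp; right; field; split; lra.
Qed.

Lemma exists_odd_between m : 1 < m ->
  exists k, (1 <= k)%nat /\ 2 * INR k - 1 <= m /\ m - 1 <= 2 * INR k.
Proof.
  intros Hm; destruct (archimed ((m + 1) / 2)) as [Hup Hup'].
  set (z := up ((m + 1) / 2)) in *.
  assert (Hz : (1 < z)%Z) by (apply lt_IZR; cbn; lra).
  exists (Z.to_nat (z - 1)).
  rewrite INR_IZR_INZ, Z2Nat.id, minus_IZR by lia; cbn [IZR IPR].
  split; [lia | split; lra].
Qed.

Theorem proposition2p3 (n d : nat) (f : list bool -> R) (t : R)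
  (hdn : (d <= n)%nat)
  (hf : exists c : list bool -> R, forall x, In x (cube n) ->
          f x = sumR (filter (fun S => Nat.leb (card S) d) (cube n))
                     (fun S => c S * chi S x))
  (ht : 0 < t) :
  Prob n (dev_event n f t) (dev_event_dec n f t) <= tail_bound (minterm n d f t).
Proof.
  destruct hf as [c hc].
  destruct (minterm n d f t) as [m|] eqn:Hm; cbn [tail_bound].
  - destruct (Rle_dec m 1) as [Hm1|Hm1].
    { apply Rle_trans with 1; [apply Prob_le_1 | pose proof (exp_ineq1_le (1 - m)); lra]. }
    destruct (exists_odd_between m) as [k [Hk [Hkm Hmk]]]; [lra|].
    assert (Hr : 0 <= 2 * INR k - 1) by (apply le_INR in Hk; cbn in Hk; lra).
    eapply Rle_trans; [exact (deviation_moment_bound n d f c hc k t Hk ht)|].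
    eapply Rle_trans; [apply moment_ratio_le_exp; [exact ht | split]|].
    + apply sumR_nonneg; intros j _; apply Rmult_le_pos; [now apply pow_le | apply W_nonneg].
    + exact (weight_sum_le n d f t m _ ht Hm (conj Hr Hkm)).
    + destruct (Req_dec (- (2 * INR k)) (1 - m)) as [->|Hne]; [lra|].
      apply Rlt_le, exp_increasing; lra.
  - eapply Rle_trans; [exact (deviation_moment_bound n d f c hc 1 t (le_n 1) ht)|].
    rewrite (sumR_ext_in _ _ (fun _ => 0)), sumR_const.
    + right; cbn; field; lra.
    + intros j Hj; rewrite (minterm_None_W n d f t Hm j Hj); ring.
Qed.
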